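(* For each $s\in\{0,\dots,r-3\}$, both $m^sf^{\underline1}\circ\mathcal{T}_r$ and its discrete Fourier transform belong to $\mathcal{V}_s$. Every element of $\mathcal{V}_s$ is a $2P$-periodic function with mean value zero, even or odd according as $r-s$ is even or odd. Moreover $\mathcal{V}_s$ is stable under the discrete Fourier transform.
   Context: $r\ge3$; $p_1,\dots,p_r$ positive pairwise coprime, $p_2,\dots,p_r$ odd; $P=p_1\cdots p_r$, $\hat p_j=P/p_j$; $E=\{\pm1\}^r$. $\mathfrak{H}$: $\underline h\in\mathbb{Z}^r$, $0\le h_j\le p_j$, $h_j/p_j\notin\mathbb{Z}$ for at least three $j$; $\mathfrak{L}$: those with $h_j$ even for $j\ge2$. $J^{\underline h}=\{j:p_j\mid h_j\}$; $\mathcal{N}^{\underline h}(\underline\varepsilon)=P+\sum_j\varepsilon_jh_j\hat p_j$; $\mathfrak{S}^{\underline h}=\mathcal{N}^{\underline h}(E)+2P\mathbb{Z}$. For $J\cap J^{\underline h}=\emptyset$: $g_J^{\underline h}(n)=\prod_{j\in J}\varepsilon_j$ if $n\equiv\mathcal{N}^{\underline h}(\underline\varepsilon)\bmod2P$ for some $\underline\varepsilon\in E$, else $0$. $\mathcal{V}_s:=\mathrm{span}_{\mathbb{C}}\{g_J^{\underline\ell}: J\subset\{1,\dots,r\},\ |J|\ge r-s,\ |J|\equiv r-s\bmod2,\ \underline\ell\in\mathfrak{L},\ J^{\underline\ell}\cap J=\emptyset\}$. $m^sf^{\underline1}(n)=-\varepsilon_1\cdots\varepsilon_r(\sum_j\varepsilon_j\hat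 p_j)^s$ if $n\equiv\mathcal{N}^{\underline1}(\underline\varepsilon)\bmod2P$ (unique $\underline\varepsilon$), else $0$ (here $\underline1=(1,\dots,1)$). $\mathcal{T}_r(m)=m$ ($r$ odd), $m-P$ ($r$ even). DFT: $\hat f(n)=(2P)^{-1/2}\sum_{\ell\bmod2P}e^{-2\pi i\ell n/(2P)}f(\ell)$. *)

From HB Require Import structures.
From mathcomp Require Import all_boot all_order all_algebra all_field.
Set Implicit Arguments. Unset Strict Implicit. Unset Printing Implicit Defensive.
Import Order.TTheory GRing.Theory Num.Theory.
Local Open Scope ring_scope.

(* Indices are 0-based: j : 'I_r stands for the paper's index j+1.
   Signs: eps : {ffun 'I_r -> bool}, with true meaning -1 and false meaning +1. *)

Definition Pp r (p : 'I_r -> nat) : nat := (\prod_(j < r) p j)%N.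
Definition phat r (p : 'I_r -> nat) (j : 'I_r) : nat := (Pp p %/ p j)%N.
Definition sgnz (b : bool) : int := if b then -1 else 1.

Definition Nh r (p : 'I_r -> nat) (h : 'I_r -> nat) (e : {ffun 'I_r -> bool}) : int :=
  (Pp p)%:Z + \sum_(j < r) sgnz (e j) * (h j * phat p j)%N%:Z.

Definition congN r (p : 'I_r -> nat) (h : 'I_r -> nat) (n : int) (e : {ffun 'I_r -> bool}) : bool :=
  (n == Nh p h e %[mod (2 * Pp p)%N%:Z])%Z.

Definition Jh r (p : 'I_r -> nat) (h : 'I_r -> nat) : {set 'I_r} := [set j | (p j %| h j)%N].

Definition inH r (p : 'I_r -> nat) (h : 'I_r -> nat) : bool :=
  [forall j, (h j <= p j)%N] && (3 <= #|[set j | ~~ (p j %| h j)%N]|)%N.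

Definition inL r (p : 'I_r -> nat) (h : 'I_r -> nat) : bool :=
  inH p h && [forall j : 'I_r, (0 < (j : nat))%N ==> ~~ odd (h j)].

(* g_J^h(n) (the product over J is independent of the choice of eps when J and J^h are disjoint) *)
Definition gJ r (p : 'I_r -> nat) (J : {set 'I_r}) (h : 'I_r -> nat) (n : int) : algC :=
  match [pick e | congN p h n e] with
  | Some e => \prod_(j in J) (sgnz (e j))%:~R
  | None => 0
  end.

Definition Vgen r (p : 'I_r -> nat) (s : nat) (J : {set 'I_r}) (l : {ffun 'I_r -> nat}) : bool :=
  [&& (r - s <= #|J|)%N, odd #|J| == odd (r - s), inL p l & [disjoint J & Jh p l]].

Definition inV r (p : 'I_r -> nat) (s : nat) (f : int -> algC) : Prop :=
  exists gs : seq (algC * {set 'I_r} * {ffun 'I_r -> nat}),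
    all (fun x => Vgen p s x.1.2 x.2) gs /\
    forall n, f n = \sum_(x <- gs) x.1.1 * gJ p x.1.2 x.2 n.

Definition one_vec r : 'I_r -> nat := fun _ => 1%N.

Definition msf r (p : 'I_r -> nat) (s : nat) (n : int) : algC :=
  if #|[set e | congN p (@one_vec r) n e]| == 1%N then
    match [pick e | congN p (@one_vec r) n e] with
    | Some e => - (\prod_(j < r) (sgnz (e j))%:~R) *
                 (\sum_(j < r) (sgnz (e j))%:~R * (phat p j)%:R) ^+ s
    | None => 0
    end
  else 0.

Definition Tr r (p : 'I_r -> nat) (m : int) : int :=
  if odd r then m else m - (Pp p)%:Z.

(* zeta = P.-root (-1) = exp(i pi / P) = exp(2 pi i / (2P)) (principal root, minimal argument) *)
Definition zeta r (p : 'I_r -> nat) : algC := (Pp p).-root (-1).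

Definition dft r (p : 'I_r -> nat) (f : int -> algC) (n : int) : algC :=
  (sqrtC (2 * Pp p)%N%:R)^-1 *
  \sum_(l < (2 * Pp p)%N) zeta p ^ (- ((l : nat)%:Z * n)) * f (l : nat)%:Z.

(* The group {±1}^r acts on Z/2PZ through the units u_eps, u_eps = eps_j modulo each of the
   pairwise coprime moduli 2p_1, p_2, ..., p_r, and u_eps N^h(eta) = N^h(eps eta) (mod 2P).
   Hence g_J^h is an eigenfunction with character chi_J(eps) = prod_(j in J) eps_j, and V_s is
   exactly the space of 2P-periodic functions whose chi_J-isotypic components vanish unless
   |J| >= r - s and |J| = r - s (mod 2): conversely, every residue is some N^h(eta) with h as
   in L, so each isotypic component of a point mass is a multiple of some g_J^h (or zero).
   Mean zero and parity follow since J = {} is excluded and u_(-1) = -1; the DFT commutes with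
   the action because the u_eps are involutive units; and m^s f^1 o T_r transforms through
   -chi_(all)(eps) (sum_j eps_j phat_j)^s, whose expansion in characters only involves
   chi_T with |T| <= s and |T| = s (mod 2). *)

From HB Require Import structures.
From mathcomp Require Import all_boot all_order all_algebra all_field.
From mathcomp Require Import ring zify.
Import Order.TTheory GRing.Theory Num.Theory.
Set Implicit Arguments. Unset Strict Implicit. Unset Printing Implicit Defensive.
Local Open Scope ring_scope.

Lemma eqz_modD d a b c e :
  (a = b %[mod d])%Z -> (c = e %[mod d])%Z -> (a + c = b + e %[mod d])%Z.
Proof. by move=> hab hce; rewrite -modzDm hab hce modzDm. Qed.

Lemma eqz_modN d a b : (a = b %[mod d])%Z -> (- a = - b %[mod d])%Z.
Proof. by move=> hab; rewrite -modzNm hab modzNm. Qed.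

Lemma eqz_modM d a b c e :
  (a = b %[mod d])%Z -> (c = e %[mod d])%Z -> (a * c = b * e %[mod d])%Z.
Proof. by move=> hab hce; rewrite -modzMm hab hce modzMm. Qed.

Lemma eqz_modMl d k a b : (a = b %[mod d])%Z -> (k * a = k * b %[mod d])%Z.
Proof. exact: eqz_modM. Qed.

Lemma eqz_mod_sum d (I : finType) (F G : I -> int) :
  (forall i, F i = G i %[mod d])%Z -> (\sum_i F i = \sum_i G i %[mod d])%Z.
Proof.
by move=> hFG; apply: (big_ind2 (fun x y => x = y %[mod d])%Z) => // *; apply: eqz_modD.
Qed.

Lemma eqz_modP d a b : reflect (a = b %[mod d])%Z (d %| a - b)%Z.
Proof. by rewrite -eqz_mod_dvd; apply: eqP. Qed.

Lemma eqz_mod_dvdl d' d a b :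
  (d' %| d)%Z -> (a = b %[mod d])%Z -> (a = b %[mod d'])%Z.
Proof. by move=> dvd /eqz_modP hab; apply/eqz_modP/(dvdz_trans dvd). Qed.

Lemma eqz_mod_scale k d a b :
  0 < k -> (a = b %[mod d])%Z -> (k * a = k * b %[mod k * d])%Z.
Proof. by move=> k_gt0 ab; rewrite -!mulz_modr // ab. Qed.

Lemma balanced_residue (a : int) (m : nat) : (0 < m)%N ->
  exists h e, (h <= m)%N /\ (sgnz e * h%:Z = a %[mod (2 * m)%N])%Z.
Proof.
move=> m_gt0; have m2_gt0 : 0 < (2 * m)%N%:Z by rewrite ltz_nat muln_gt0.
have t_ge0 : 0 <= (a %% (2 * m)%N)%Z by rewrite modz_ge0 // gt_eqF.
have t_lt : (a %% (2 * m)%N)%Z < (2 * m)%N by rewrite ltz_pmod.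
have [t_le|t_gt] := lerP (a %% (2 * m)%N)%Z m%:Z.
  exists `|(a %% (2 * m)%N)%Z|%N, false; split; first by rewrite -lez_nat gez0_abs.
  by rewrite mul1r gez0_abs // modz_mod.
have d_ge0 : 0 <= (2 * m)%N%:Z - (a %% (2 * m)%N)%Z by rewrite subr_ge0 ltW.
exists `|(2 * m)%N%:Z - (a %% (2 * m)%N)%Z|%N, true.
split; first by rewrite -lez_nat gez0_abs // PoszM; lia.
by rewrite gez0_abs //= mulN1r opprB addrC -mulN1r modzMDl modz_mod.
Qed.

Lemma coprime_prodr (I : Type) (s : seq I) (P : pred I) (F : I -> nat) a :
  (forall i, P i -> coprime a (F i)) -> coprime a (\prod_(i <- s | P i) F i).
Proof.
move=> aF; apply: (big_ind (coprime a)) => [|x y ax ay|//]; first exact: coprimen1.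
by rewrite coprimeMr ax.
Qed.

Lemma sgnz_addb a b : sgnz (a (+) b) = sgnz a * sgnz b.
Proof. by case: a; case: b. Qed.

Lemma sgnz_mod d a b x :
  (d %| 2 * x)%Z -> (sgnz a * x = sgnz b * x %[mod d])%Z.
Proof.
move=> dvd2x; apply/eqz_modP; case: a; case: b; rewrite /= ?subrr ?dvdz0 //.
- by rewrite (_ : -1 * x - 1 * x = - (2 * x)) ?rpredN //; ring.
- by rewrite (_ : 1 * x - -1 * x = 2 * x) //; ring.
Qed.

Section SignCharacters.

Variable r : nat.
Local Notation signs := {ffun 'I_r -> bool}.

Definition signM (s t : signs) : signs := [ffun j => s j (+) t j].
Definition sign1 : signs := [ffun => false].
Definition signN1 : signs := [ffun => true].

Lemma signKM s : cancel (signM s) (signM s).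
Proof. by move=> t; apply/ffunP => j; rewrite !ffunE addKb. Qed.

Lemma signMK s : cancel (signM^~ s) (signM^~ s).
Proof. by move=> t; apply/ffunP => j; rewrite !ffunE addbK. Qed.

Lemma signMv s : signM s s = sign1.
Proof. by apply/ffunP => j; rewrite !ffunE addbb. Qed.

Lemma signM1 s : signM s sign1 = s.
Proof. by apply/ffunP => j; rewrite !ffunE addbF. Qed.

Lemma signM_inj s : injective (signM s).
Proof. exact: can_inj (signKM s). Qed.

Definition sgchar (J : {set 'I_r}) (s : signs) : algC := \prod_(j in J) (sgnz (s j))%:~R.

Lemma sgcharE J s : sgchar J s = \prod_j (if j \in J then (sgnz (s j))%:~R else 1).
Proof. exact: big_mkcond. Qed.

Lemma sgcharM J s t : sgchar J (signM s t) = sgchar J s * sgchar J t.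
Proof. by rewrite -big_split; apply: eq_bigr => j _; rewrite ffunE sgnz_addb intrM. Qed.

Lemma sgcharN1 J : sgchar J signN1 = (-1) ^+ #|J|.
Proof. by rewrite /sgchar (eq_bigr (fun _ => -1)) ?prodr_const // => j _; rewrite ffunE. Qed.

Lemma sgchar0 s : sgchar set0 s = 1.
Proof. exact: big_set0. Qed.

Lemma sgnzC_sqr (b : bool) : (sgnz b)%:~R * (sgnz b)%:~R = 1 :> algC.
Proof. by case: b; rewrite /= ?mulrNN mulr1. Qed.

Lemma sgchar_setC J s : sgchar J s * sgchar setT s = sgchar (~: J) s.
Proof.
rewrite !sgcharE -big_split; apply: eq_bigr => j _.
by rewrite !inE; case: (j \in J); rewrite /= ?sgnzC_sqr ?mul1r.
Qed.

Lemma sgchar_flip (J : {set 'I_r}) k : k \in J -> sgchar J [ffun j => j == k] = -1.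
Proof.
move=> kJ; rewrite /sgchar (bigD1 k) //= ffunE eqxx big1 ?mulr1 // => j /andP[_ /negbTE jk].
by rewrite ffunE jk.
Qed.

Lemma sgchar_orthogonal J K :
  \sum_s sgchar J s * sgchar K s = if J == K then 2 ^+ r else 0 :> algC.
Proof.
pose F j (b : bool) : algC :=
  (if j \in J then (sgnz b)%:~R else 1) * (if j \in K then (sgnz b)%:~R else 1).
have sumF j : \sum_b F j b = if (j \in J) == (j \in K) then 2 else 0.
  by rewrite big_bool /F; case: (j \in J); case: (j \in K) => /=; ring.
rewrite (eq_bigr (fun s : signs => \prod_j F j (s j))); last first.
  by move=> s _; rewrite !sgcharE -big_split.
rewrite -bigA_distr_bigA /=; have [eqJK|neqJK] := eqVneq J K.
  by rewrite (eq_bigr (fun _ => 2)) ?prodr_const ?card_ord // => j _; rewrite sumF eqJK eqxx.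
have [j /negbTE Jj] : exists j, (j \in J) != (j \in K).
  by apply/existsP; apply: contraNT neqJK => /existsPn eqJK; apply/eqP/setP => j;
     apply/eqP; rewrite -[_ == _]negbK eqJK.
by rewrite (bigD1 j) //= sumF Jj mul0r.
Qed.

Lemma sum_sgchar s : \sum_J sgchar J s = if s == sign1 then 2 ^+ r else 0.
Proof.
transitivity (\prod_j ((sgnz (s j))%:~R + 1) : algC).
  by rewrite bigA_distr; apply: eq_bigr => J _; rewrite sgcharE.
have [->|/eqP neq1] := eqVneq s sign1.
  by rewrite (eq_bigr (fun _ => 2)) ?prodr_const ?card_ord // => j _; rewrite ffunE.
have [j sj] : exists j, s j.
  by apply/existsP; apply: contra_notT neq1 => /existsPn sF; apply/ffunP => j;
     rewrite ffunE; apply/negbTE/sF.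
by rewrite (bigD1 j) //= sj addNr mul0r.
Qed.

Definition set_toggle (U : {set 'I_r}) j := if j \in U then U :\ j else j |: U.

Lemma set_toggleK j : involutive (set_toggle ^~ j).
Proof.
move=> U; rewrite /set_toggle; case jU: (j \in U); first by rewrite setD11 setD1K.
by rewrite setU11 setU1K ?jU.
Qed.

Lemma sgchar_toggle U j s : sgchar (set_toggle U j) s = sgchar U s * (sgnz (s j))%:~R.
Proof.
rewrite /set_toggle /sgchar; case: ifP => jU; last by rewrite big_setU1 ?jU //= mulrC.
rewrite [in RHS](bigD1 j) //= mulrC mulrA sgnzC_sqr mul1r.
by apply: eq_bigl => i; rewrite !inE andbC.
Qed.

Definition low_degree d (T : {set 'I_r}) := (#|T| <= d)%N && (odd #|T| == odd d).

Lemma low_degree_toggle d U j : low_degree d (set_toggle U j) -> low_degree d.+1 U.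
Proof.
rewrite /low_degree /set_toggle; case: ifP => jU.
  by rewrite (cardsD1 j U) jU add1n /= => /andP[h1 /eqP <-]; rewrite ltnS h1 /= eqxx.
rewrite cardsU1 jU add1n /= => /andP[h1 /eqP <-].
by rewrite negbK eqxx andbT (leq_trans (ltnW h1)).
Qed.

Definition sglin (c : 'I_r -> algC) (s : signs) : algC := \sum_j (sgnz (s j))%:~R * c j.

(* [sglin c * sgchar T = sum_j c j * sgchar (set_toggle T j)], so each power raises the
   degree of the characters involved by one. *)
Lemma sglin_expr_expansion (c : 'I_r -> algC) d : exists a : {set 'I_r} -> algC,
  (forall T, a T != 0 -> low_degree d T) /\
  forall s, sglin c s ^+ d = \sum_T a T * sgchar T s.
Proof.
elim: d => [|d [a [a_low a_exp]]].
  exists (fun T => (T == set0)%:R); split=> [T|s].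
    by have [->|_] := eqVneq T set0; rewrite ?eqxx // /low_degree cards0.
  rewrite expr0 (bigD1 set0) //= eqxx mul1r sgchar0 big1 ?addr0 // => T /negbTE ->.
  by rewrite mul0r.
exists (fun U => \sum_j c j * a (set_toggle U j)); split=> [U|s].
  have [j /a_low /low_degree_toggle //|a0] := pickP (fun j => a (set_toggle U j) != 0).
  by rewrite big1 ?eqxx // => j _; move/negbFE/eqP: (a0 j) => ->; rewrite mulr0.
rewrite exprSr a_exp mulr_suml.
under eq_bigr => T _ do rewrite mulr_sumr.
rewrite exchange_big /=.
under [RHS]eq_bigr => U _ do rewrite mulr_suml.
rewrite [RHS]exchange_big /=; apply: eq_bigr => j _.
rewrite [RHS](reindex_inj (inv_inj (set_toggleK j))) /=; apply: eq_bigr => T _.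
by rewrite set_toggleK sgchar_toggle; ring.
Qed.

Lemma sgchar_sglin_expr_orthogonal (c : 'I_r -> algC) d K : ~~ low_degree d K ->
  \sum_s sgchar K s * sglin c s ^+ d = 0.
Proof.
move=> K_high; have [a [a_low a_exp]] := sglin_expr_expansion c d.
transitivity (\sum_T a T * \sum_s sgchar K s * sgchar T s).
  under eq_bigr => s _ do rewrite a_exp mulr_sumr.
  rewrite exchange_big /=; apply: eq_bigr => T _; rewrite mulr_sumr.
  by apply: eq_bigr => s _; rewrite mulrCA.
rewrite big1 // => T _; rewrite sgchar_orthogonal.
have [<-|_] := eqVneq K T; last by rewrite mulr0.
by move/contraNeq: (a_low K) => /(_ K_high) ->; rewrite mul0r.
Qed.

Definition admissible s (J : {set 'I_r}) :=
  (r - s <= #|J|)%N && (odd #|J| == odd (r - s)).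

Lemma admissible_setC s J : (s <= r)%N -> admissible s J = low_degree s (~: J).
Proof.
move=> s_le_r; have J_le_r : (#|J| <= r)%N by rewrite -[leqRHS]card_ord max_card.
rewrite /admissible /low_degree (cardsCs (~: J)) setCK card_ord; congr andb; first lia.
by rewrite !oddB //; case: (odd r); case: (odd s); case: (odd #|J|).
Qed.

End SignCharacters.

Arguments signM_inj {r} s [x1 x2].
Arguments sign1 {r}.
Arguments signN1 {r}.

Section SignAction.

Variables (r : nat) (p : 'I_r -> nat).
Hypothesis r_gt0 : (0 < r)%N.
Hypothesis p_gt0 : forall j, (0 < p j)%N.
Hypothesis p_coprime : forall i j : 'I_r, i != j -> coprime (p i) (p j).
Hypothesis p_odd : forall j : 'I_r, (0 < (j : nat))%N -> odd (p j).

Local Notation P := (Pp p).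
Local Notation M := (2 * Pp p)%N.
Local Notation signs := {ffun 'I_r -> bool}.

Lemma phatE j : phat p j = (\prod_(k | k != j) p k)%N.
Proof. by rewrite /phat /Pp (bigD1 j) //= mulKn. Qed.

Lemma Pp_phat j : P = (p j * phat p j)%N.
Proof. by rewrite phatE /Pp (bigD1 j). Qed.

Lemma Pp_gt0 : (0 < P)%N.
Proof. exact: prodn_gt0. Qed.

Lemma phat_gt0 j : (0 < phat p j)%N.
Proof. by rewrite phatE prodn_gt0. Qed.

Lemma p_dvd_phat i j : i != j -> (p i %| phat p j)%N.
Proof. by move=> ij; rewrite phatE (bigD1 i) //= dvdn_mulr. Qed.

Lemma coprime_p_phat j : coprime (p j) (phat p j).
Proof.
by rewrite phatE; apply: coprime_prodr => i ij; rewrite p_coprime // eq_sym.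
Qed.

(* The moduli 2 p_1, p_2, ..., p_r are pairwise coprime with product 2P. *)
Definition crtmod (j : 'I_r) : nat := if (j : nat) == 0%N then (2 * p j)%N else p j.

Lemma crtmod_dvd j : (crtmod j %| 2 * p j)%N.
Proof. by rewrite /crtmod; case: ifP => _; rewrite ?dvdnn ?dvdn_mull. Qed.

Lemma crtmod_half j x : (crtmod j %| 2 * x)%Z -> (p j %| x)%Z.
Proof.
rewrite !dvdzE abszM /crtmod; case: ifP => [_|j0]; first by rewrite dvdn_pmul2l.
by rewrite Gauss_dvdr // coprime_sym coprime2n p_odd // lt0n j0.
Qed.

Lemma coprime_crtmod i j : i != j -> coprime (crtmod i) (crtmod j).
Proof.
have odd_p (k : 'I_r) : (k : nat) != 0%N -> coprime 2 (p k).
  by rewrite -lt0n coprime2n => /p_odd ->.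
move=> ij; rewrite /crtmod; case: ifP => /eqP i0; case: ifP => /eqP j0.
- by case/eqP: ij; apply: val_inj; rewrite /= i0 j0.
- by rewrite coprimeMl p_coprime // odd_p //; apply/eqP.
- by rewrite coprimeMr p_coprime // coprime_sym odd_p //; apply/eqP.
- exact: p_coprime.
Qed.

Definition crtcof (j : 'I_r) : nat := (\prod_(i | i != j) crtmod i)%N.

Lemma prod_crtmod : (\prod_j crtmod j)%N = M.
Proof.
pose j0 : 'I_r := Ordinal r_gt0.
rewrite (eq_bigr (fun j => (if j == j0 then 2 else 1) * p j)%N) => [|j _]; last first.
  by rewrite /crtmod (_ : (j == j0) = ((j : nat) == 0%N)) //; case: ifP; rewrite ?mul1n.
by rewrite big_split /= (bigD1 j0) //= big1 ?muln1 // => j /negbTE ->.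
Qed.

Lemma crtmodMcof j : (crtmod j * crtcof j)%N = M.
Proof. by rewrite -prod_crtmod [RHS](bigD1 j). Qed.

Lemma crtcofE j : crtcof j = if (j : nat) == 0%N then phat p j else (2 * phat p j)%N.
Proof.
apply/eqP; rewrite -(eqn_pmul2l (_ : 0 < crtmod j)%N); last first.
  by rewrite /crtmod; case: ifP; rewrite ?muln_gt0 p_gt0.
by rewrite crtmodMcof (Pp_phat j) /crtmod; case: ifP => _; [rewrite mulnA | rewrite mulnCA].
Qed.

Lemma coprime_crtmod_cof j : coprime (crtmod j) (crtcof j).
Proof.
by apply: coprime_prodr => i ij; rewrite coprime_crtmod // eq_sym.
Qed.

Lemma crtmod_dvd_cof k j : k != j -> (crtmod k %| crtcof j)%N.
Proof. by move=> kj; rewrite /crtcof (bigD1 k) //= dvdn_mulr. Qed.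

Lemma crt_eqz_mod a b : (forall k, a = b %[mod crtmod k])%Z -> (a = b %[mod M])%Z.
Proof.
move=> ab_mod; apply/eqz_modP; rewrite dvdzE -prod_crtmod -big_enum /=.
have: uniq (enum 'I_r) by apply: enum_uniq.
elim: (enum _) => [|k ks IH] /=; first by rewrite big_nil dvd1n.
case/andP => k_ks ks_uniq; rewrite big_cons Gauss_dvd ?IH //.
  by rewrite andbT; have /eqz_modP := ab_mod k.
rewrite big_seq; apply: coprime_prodr => i iks.
by apply: coprime_crtmod; apply: contraNneq k_ks => ->.
Qed.

Lemma crtmod_dvd_M j : ((crtmod j)%:Z %| M%:Z)%Z.
Proof. by rewrite dvdzE /= -(crtmodMcof j) dvdn_mulr. Qed.

Definition crtbasis (j : 'I_r) : nat := chinese (crtmod j) (crtcof j) 1 0.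

Lemma crtbasis_mod j : ((crtbasis j)%:Z = 1 %[mod crtmod j])%Z.
Proof. by rewrite !modz_nat chinese_modl // coprime_crtmod_cof. Qed.

Lemma crtcof_dvd_basis j : (crtcof j %| crtbasis j)%N.
Proof. by rewrite /dvdn chinese_modr ?mod0n // coprime_crtmod_cof. Qed.

Lemma crtbasis_mod_other k j : k != j -> ((crtbasis j)%:Z = 0 %[mod crtmod k])%Z.
Proof.
move=> kj; apply/eqz_modP; rewrite subr0 dvdzE.
exact: dvdn_trans (crtmod_dvd_cof kj) (crtcof_dvd_basis j).
Qed.

Definition sgunit (s : signs) : int := \sum_j sgnz (s j) * (crtbasis j)%:Z.

Lemma sgunit_mod s k : (sgunit s = sgnz (s k) %[mod crtmod k])%Z.
Proof.
have -> : sgnz (s k) = \sum_j sgnz (s j) * (j == k)%:R.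
  by rewrite (bigD1 k) //= eqxx mulr1 big1 ?addr0 // => j /negbTE ->; rewrite mulr0.
apply: eqz_mod_sum => j; apply: eqz_modMl.
have [->|jk] := eqVneq j k; first exact: crtbasis_mod.
by apply: crtbasis_mod_other; rewrite eq_sym.
Qed.

Lemma sgunitM s t : (sgunit s * sgunit t = sgunit (signM s t) %[mod M])%Z.
Proof.
apply: crt_eqz_mod => k; rewrite (eqz_modM (sgunit_mod s k) (sgunit_mod t k)).
by rewrite (sgunit_mod _ k) ffunE sgnz_addb.
Qed.

Lemma sgunit_const b : (sgunit [ffun => b] = sgnz b %[mod M])%Z.
Proof. by apply: crt_eqz_mod => k; rewrite (sgunit_mod _ k) ffunE. Qed.

Lemma sgunitK s a : (sgunit s * (sgunit s * a) = a %[mod M])%Z.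
Proof.
rewrite mulrA -modzMml sgunitM signMv (sgunit_const false) modzMml.
by rewrite /= mul1r.
Qed.

Lemma eqz_mod_sgunit s a b :
  (sgunit s * a == sgunit s * b %[mod M])%Z = (a == b %[mod M])%Z.
Proof.
apply/eqP/eqP => [|ab]; last exact: eqz_modMl.
by move/(eqz_modMl (sgunit s)); rewrite !sgunitK.
Qed.

Lemma crtmod_dvd2 k (x : int) : (p k %| x)%Z -> (crtmod k %| 2 * x)%Z.
Proof.
rewrite !dvdzE abszM => /(dvdn_mul (dvdnn 2)); apply: dvdn_trans; exact: crtmod_dvd.
Qed.

Lemma sgunit_Nh s (h : 'I_r -> nat) e :
  (sgunit s * Nh p h e = Nh p h (signM s e) %[mod M])%Z.
Proof.
apply: crt_eqz_mod => k; rewrite -modzMml (sgunit_mod s k) modzMml /Nh mulrDr.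
apply: eqz_modD.
  rewrite -[Posz P in RHS]mul1r -[1]/(sgnz false); apply/sgnz_mod/crtmod_dvd2.
  by rewrite dvdzE (Pp_phat k) dvdn_mulr.
rewrite mulr_sumr; apply: eqz_mod_sum => j; rewrite ffunE sgnz_addb -mulrA.
have [->|jk] := eqVneq j k; first by [].
apply/sgnz_mod/crtmod_dvd2/dvdz_mull; rewrite dvdzE /= dvdn_mull //.
by apply: p_dvd_phat; rewrite eq_sym.
Qed.

Lemma sgunit_Pp s : (sgunit s * P = P %[mod M])%Z.
Proof.
have := sgunit_Nh s (fun _ => 0%N) s.
by rewrite /Nh !big1 ?addr0 // => j _; rewrite mul0n mulr0.
Qed.

Lemma Nh_mod_p (h : 'I_r -> nat) e j :
  (Nh p h e = sgnz (e j) * (h j * phat p j)%N %[mod p j])%Z.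
Proof.
rewrite /Nh (bigD1 j) //= addrCA -[X in (_ = X %[mod _])%Z]addr0; apply: eqz_modD => //.
apply/eqz_modP; rewrite subr0 rpredD //; first by rewrite dvdzE /= (Pp_phat j) dvdn_mulr.
apply: rpred_sum => i ij; rewrite dvdz_mull // dvdzE /= dvdn_mull //.
by apply: p_dvd_phat; rewrite eq_sym.
Qed.

Lemma Nh_sign_eq (h : 'I_r -> nat) e t j :
  (Nh p h e = Nh p h t %[mod M])%Z -> ~~ (p j %| h j)%N -> e j = t j.
Proof.
move=> Net hj; apply/eqP; apply: contraNT hj => etj.
have uw : (sgunit (signM e t) = -1 %[mod crtmod j])%Z.
  by rewrite (sgunit_mod _ j) ffunE; move: etj; case: (e j); case: (t j).
have Nt_opp : (- Nh p h t = Nh p h t %[mod crtmod j])%Z.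
  rewrite -mulN1r -modzMml -uw modzMml; apply: eqz_mod_dvdl (crtmod_dvd_M j) _.
  by rewrite sgunit_Nh signMK.
have /crtmod_half p_Nt : (crtmod j %| 2 * Nh p h t)%Z.
  by move/eqz_modP: Nt_opp; rewrite -opprD rpredN (_ : _ + _ = 2 * Nh p h t) //; ring.
have : (p j %| sgnz (t j) * (h j * phat p j)%N)%Z.
  set x := sgnz _ * _; have -> : x = Nh p h t - (Nh p h t - x) by ring.
  by rewrite rpredB //; apply/eqz_modP/Nh_mod_p.
rewrite dvdzE abszM (_ : `|sgnz (t j)|%N = 1%N) ?mul1n; last by case: (t j).
by rewrite Gauss_dvdl ?coprime_p_phat.
Qed.

Lemma sgchar_Nh_eq (J : {set 'I_r}) (h : 'I_r -> nat) e t : [disjoint J & Jh p h] ->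
  (Nh p h e = Nh p h t %[mod M])%Z -> sgchar J e = sgchar J t.
Proof.
move=> dis Net; apply: eq_bigr => j jJ; rewrite (Nh_sign_eq Net) //.
by move: (disjointFr dis jJ); rewrite inE => ->.
Qed.

Lemma congN_mod (h : 'I_r -> nat) a b :
  (a = b %[mod M])%Z -> congN p h a =1 congN p h b.
Proof. by rewrite /congN => ab e; rewrite ab. Qed.

Lemma congN_sgunit (h : 'I_r -> nat) s n e :
  congN p h (sgunit s * n) e = congN p h n (signM s e).
Proof. by rewrite /congN -sgunit_Nh -(eqz_mod_sgunit s n) sgunitK. Qed.

Lemma gJ_congN (J : {set 'I_r}) (h : 'I_r -> nat) n e :
  [disjoint J & Jh p h] -> congN p h n e -> gJ p J h n = sgchar J e.
Proof.
move=> dis ne; rewrite /gJ; case: pickP => [e' ne'|/(_ e)]; last by rewrite ne.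
by apply: sgchar_Nh_eq dis _; rewrite -(eqP ne') (eqP ne).
Qed.

Lemma gJ_eq0 (J : {set 'I_r}) (h : 'I_r -> nat) n : (forall e, ~~ congN p h n e) -> gJ p J h n = 0.
Proof. by move=> nN; rewrite /gJ; case: pickP => // e ne; have := nN e; rewrite ne. Qed.

Lemma gJ_mod (J : {set 'I_r}) (h : 'I_r -> nat) a b : (a = b %[mod M])%Z -> gJ p J h a = gJ p J h b.
Proof. by move=> ab; rewrite /gJ (eq_pick (congN_mod h ab)). Qed.

Lemma gJ_sgunit (J : {set 'I_r}) (h : 'I_r -> nat) s n : [disjoint J & Jh p h] ->
  gJ p J h (sgunit s * n) = sgchar J s * gJ p J h n.
Proof.
move=> dis; have [e ne|nN] := pickP (congN p h n).
  rewrite (gJ_congN dis ne) (gJ_congN (e := signM s e)) ?sgcharM //.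
  by rewrite congN_sgunit signKM.
by rewrite !gJ_eq0 ?mulr0 // => e; rewrite ?congN_sgunit nN.
Qed.

(* The constant [P] of [Nh] is absorbed by the digit j = 0. *)
Lemma Nh_digit (l : int) j : exists (h : nat) (e : bool),
  [/\ (h <= p j)%N, (0 < (j : nat))%N -> ~~ odd h &
   (sgnz e * (h * phat p j)%N =
      l * (crtbasis j)%:Z - (if (j : nat) == 0%N then P%:Z else 0) %[mod M])%Z].
Proof.
pose c := (crtbasis j %/ crtcof j)%N.
pose a : int := if (j : nat) == 0%N then l * c%:Z - (p j)%:Z else 2 * (l * c%:Z).
have [h [e [h_le ha]]] := balanced_residue a (p_gt0 j).
exists h, e; split=> // [j_gt0|].
  have /eqz_modP : (sgnz e * h = a %[mod 2])%Z.
    by apply: eqz_mod_dvdl ha; rewrite dvdzE /= dvdn_mulr.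
  rewrite /a lt0n in j_gt0 *; rewrite (negbTE j_gt0) -dvdn2.
  by rewrite (rpredBr _ (dvdz_mulr _ (dvdzz 2))) dvdzE abszM; case: (e); rewrite /= mul1n.
have -> : l * (crtbasis j)%:Z - (if (j : nat) == 0%N then P%:Z else 0) = (phat p j)%:Z * a.
  rewrite -(divnK (crtcof_dvd_basis j)) -/c crtcofE /a (Pp_phat j).
  by case: ifP => _; rewrite !PoszM; ring.
have -> : M%:Z = (phat p j)%:Z * (2 * p j)%N%:Z.
  by rewrite (Pp_phat j) -PoszM; congr Posz; ring.
rewrite PoszM (mulrC h%:Z) mulrCA; apply: eqz_mod_scale ha.
by rewrite ltz_nat phat_gt0.
Qed.

Lemma Nh_surj (l : int) : exists (h : {ffun 'I_r -> nat}) e,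
  [/\ forall j, (h j <= p j)%N, forall j : 'I_r, (0 < (j : nat))%N -> ~~ odd (h j)
    & (l = Nh p h e %[mod M])%Z].
Proof.
pose P0 (j : 'I_r) : int := if (j : nat) == 0%N then P%:Z else 0.
pose digit j (he : nat * bool) := [/\ (he.1 <= p j)%N, (0 < (j : nat))%N -> ~~ odd he.1 &
  (sgnz he.2 * (he.1 * phat p j)%N = l * (crtbasis j)%:Z - P0 j %[mod M])%Z].
have [he he_spec] : exists he : 'I_r -> nat * bool, forall j, digit j (he j).
  by apply: fin_all_exists => j; have [h [e he]] := Nh_digit l j; exists (h, e).
exists [ffun j => (he j).1], [ffun j => (he j).2].
split=> [j|j|]; rewrite ?ffunE; first by case: (he_spec j).
  by case: (he_spec j) => _ + _; apply.
have l_sum : (l = \sum_j l * (crtbasis j)%:Z %[mod M])%Z.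
  rewrite -mulr_sumr -modzMmr (_ : \sum_j _ = sgunit sign1).
    by rewrite (sgunit_const false) modzMmr mulr1.
  by apply: eq_bigr => j _; rewrite ffunE mul1r.
have sumP0 : \sum_j P0 j = P%:Z.
  rewrite (bigD1 (Ordinal r_gt0)) //= big1 ?addr0 // => j j_neq0.
  by rewrite /P0 ifF //; apply: contraNF j_neq0 => /eqP j0; apply/eqP/val_inj.
rewrite l_sum /Nh -[X in (X = _ %[mod _])%Z](subrK P%:Z) -{1}sumP0 -sumrB addrC.
apply: eqz_modD => //; apply: eqz_mod_sum => j; rewrite !ffunE.
by case: (he_spec j) => _ _ ->.
Qed.

Definition periodic (f : int -> algC) := forall a b, (a = b %[mod M])%Z -> f a = f b.

(* [(2 ^+ r)^-1 * sgproj J f] is the component of [f] on which the units [sgunit s] act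
   through the character [sgchar J]. *)
Definition sgproj (J : {set 'I_r}) (f : int -> algC) n :=
  \sum_s sgchar J s * f (sgunit s * n).

Lemma sgproj_sgunit J f t n : periodic f ->
  sgproj J f (sgunit t * n) = sgchar J t * sgproj J f n.
Proof.
move=> f_per; rewrite /sgproj mulr_sumr (reindex_inj (can_inj (signMK t))) /=.
apply: eq_bigr => s _; rewrite sgcharM [RHS]mulrA [sgchar J t * _]mulrC; congr (_ * _).
apply: f_per.
by rewrite mulrA -modzMml sgunitM signMK modzMml.
Qed.

Lemma sgproj_decomposition f n : periodic f ->
  f n = (2 ^+ r)^-1 * \sum_J sgproj J f n.
Proof.
move=> f_per; rewrite /sgproj exchange_big /= (bigD1 sign1) //= [X in _ + X]big1.
  rewrite addr0 -mulr_suml sum_sgchar eqxx mulrA mulVf ?mul1r ?expf_neq0 ?pnatr_eq0 //.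
  by apply: f_per; rewrite -modzMml (sgunit_const false) modzMml mul1r.
by move=> s s_neq1; rewrite -mulr_suml sum_sgchar (negbTE s_neq1) mul0r.
Qed.

Lemma sgproj_gJ J (K : {set 'I_r}) (h : 'I_r -> nat) n : [disjoint K & Jh p h] ->
  sgproj J (gJ p K h) n = (J == K)%:R * 2 ^+ r * gJ p K h n.
Proof.
move=> dis; rewrite /sgproj (eq_bigr (fun s => sgchar J s * sgchar K s * gJ p K h n)).
  by rewrite -mulr_suml sgchar_orthogonal; case: eqP; rewrite ?mul1r ?mul0r.
by move=> s _; rewrite gJ_sgunit // mulrA.
Qed.

Lemma resM_subproof (x : int) : (`|(x %% M)%Z| < M)%N.
Proof.
have M_gt0 : 0 < M%:Z by rewrite ltz_nat muln_gt0 Pp_gt0.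
by rewrite -ltz_nat gez0_abs ?ltz_pmod // modz_ge0 // gt_eqF.
Qed.

Definition resM (x : int) : 'I_M := Ordinal (resM_subproof x).

Lemma resM_mod x : ((resM x : nat)%:Z = x %[mod M])%Z.
Proof.
have M_gt0 : 0 < M%:Z by rewrite ltz_nat muln_gt0 Pp_gt0.
by rewrite /= gez0_abs ?modz_mod // modz_ge0 // gt_eqF.
Qed.

Lemma resM_eq (l : 'I_M) x : ((l : nat)%:Z = x %[mod M])%Z -> resM x = l.
Proof.
move=> lx; apply: val_inj; apply/eqP; rewrite -eqz_nat.
have small (k : 'I_M) : ((k : nat)%:Z %% M)%Z = k by rewrite modz_small // ltz_nat ltn_ord.
by rewrite -[X in X == _]small -[X in _ == X]small resM_mod lx.
Qed.

Lemma sum_indicator F x : periodic F ->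
  \sum_(l < M) F (l : nat)%:Z * ((x == (l : nat)%:Z %[mod M])%Z)%:R = F x.
Proof.
move=> F_per; rewrite (bigD1 (resM x)) //= big1 => [|l l_neq].
  by rewrite resM_mod eqxx mulr1 addr0; apply: F_per; rewrite resM_mod.
by case: eqP => [/esym/resM_eq|_]; rewrite ?mulr0 // => lx; rewrite lx eqxx in l_neq.
Qed.

Lemma reindex_sgunit s F : periodic F ->
  \sum_(l < M) F (l : nat)%:Z = \sum_(l < M) F (sgunit s * (l : nat)%:Z).
Proof.
move=> F_per; have resMK : involutive (fun l : 'I_M => resM (sgunit s * (l : nat)%:Z)).
  by move=> l; apply: resM_eq; rewrite -modzMmr resM_mod modzMmr sgunitK.
rewrite (reindex_inj (inv_inj resMK)); apply: eq_bigr => l _; apply: F_per.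
exact: resM_mod.
Qed.

Lemma inV0 s : inV p s (fun _ => 0).
Proof. by exists [::]; split=> // n; rewrite big_nil. Qed.

Lemma eq_inV s f g : f =1 g -> inV p s g -> inV p s f.
Proof. by move=> fg [gs [gs_gen g_eq]]; exists gs; split=> // n; rewrite fg g_eq. Qed.

Lemma inVD s f g : inV p s f -> inV p s g -> inV p s (fun n => f n + g n).
Proof.
move=> [fs [fs_gen f_eq]] [gs [gs_gen g_eq]]; exists (fs ++ gs).
by rewrite all_cat fs_gen gs_gen; split=> // n; rewrite big_cat f_eq g_eq.
Qed.

Lemma inVZ s c f : inV p s f -> inV p s (fun n => c * f n).
Proof.
move=> [fs [fs_gen f_eq]]; exists [seq (c * x.1.1, x.1.2, x.2) | x <- fs].
rewrite all_map; split=> // n; rewrite big_map f_eq mulr_sumr.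
by apply: eq_bigr => x _; rewrite mulrA.
Qed.

Lemma inV_sum s (I : finType) (F : I -> int -> algC) :
  (forall i, inV p s (F i)) -> inV p s (fun n => \sum_i F i n).
Proof.
move=> F_V; elim: (index_enum I) => [|i ix IH].
  by apply: eq_inV (inV0 s) => n; rewrite big_nil.
by apply: eq_inV (inVD (F_V i) IH) => n; rewrite big_cons.
Qed.

Lemma inV_gJ s J (l : {ffun 'I_r -> nat}) : Vgen p s J l -> inV p s (gJ p J l).
Proof.
by move=> gen; exists [:: (1, J, l)]; rewrite /= gen; split=> // n; rewrite big_seq1 mul1r.
Qed.

Lemma inV_periodic s f : inV p s f -> periodic f.
Proof.
move=> [gs [_ f_eq]] a b ab; rewrite !f_eq; apply: eq_bigr => x _.
by rewrite (gJ_mod _ _ ab).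
Qed.

Lemma inV_sgproj s f J n : inV p s f -> ~~ admissible s J -> sgproj J f n = 0.
Proof.
move=> [gs [gs_gen f_eq]] J_bad; rewrite /sgproj.
under eq_bigr => t _ do rewrite f_eq mulr_sumr.
rewrite exchange_big big_seq big1 // => [[[c K] l]] /(allP gs_gen) /and4P[K_le K_odd _ dis].
rewrite /= (eq_bigr (fun t => c * (sgchar J t * gJ p K l (sgunit t * n)))) => [|t _].
  rewrite -mulr_sumr -/(sgproj J _ n) sgproj_gJ // (_ : J == K = false) ?mul0r ?mulr0 //.
  by apply/negbTE; apply: contraNneq J_bad => ->; rewrite /admissible K_le.
by rewrite mulrCA.
Qed.

Definition sgsum (J : {set 'I_r}) (h : 'I_r -> nat) n := \sum_t sgchar J t * (congN p h n t)%:R.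

Lemma sgsum_gJ (J : {set 'I_r}) (h : 'I_r -> nat) n : [disjoint J & Jh p h] ->
  sgsum J h n = (\sum_t (congN p h (Nh p h sign1) t)%:R) * gJ p J h n.
Proof.
move=> dis; have [e ne|nN] := pickP (congN p h n); last first.
  rewrite gJ_eq0 => [|e]; last by rewrite nN.
  by rewrite mulr0 /sgsum big1 // => t _; rewrite nN mulr0.
have congN_Nh t : congN p h n t = congN p h (Nh p h e) t.
  by rewrite /congN (eqP ne).
rewrite (gJ_congN dis ne) mulrC /sgsum mulr_sumr.
rewrite [RHS](reindex_inj (signM_inj e)); apply: eq_bigr => t _.
have -> : congN p h (Nh p h sign1) (signM e t) = congN p h (Nh p h e) t.
  rewrite -congN_sgunit; apply: congN_mod.
  by rewrite sgunit_Nh signM1.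
rewrite congN_Nh; case: (boolP (congN p h (Nh p h e) t)) => [Ne|_]; last by rewrite !mulr0.
by rewrite (sgchar_Nh_eq dis (esym (eqP Ne))).
Qed.

Lemma sgsum_eq0 (J : {set 'I_r}) (h : 'I_r -> nat) k n :
  k \in J -> (p k %| h k)%N -> sgsum J h n = 0.
Proof.
move=> kJ pk_hk; pose w : signs := [ffun j => j == k].
have Nh_w t : (Nh p h (signM w t) = Nh p h t %[mod M])%Z.
  rewrite /Nh; apply: eqz_modD => //; apply: eqz_mod_sum => j; rewrite !ffunE.
  have [->|//] := eqVneq j k; apply/sgnz_mod; rewrite PoszM dvdzE /=.
  by rewrite (Pp_phat k) !mulnA; apply: dvdn_mul => //; apply: dvdn_mul.
have : sgsum J h n = - sgsum J h n.
  rewrite /sgsum [LHS](reindex_inj (signM_inj w)) -sumrN; apply: eq_bigr => t _.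
  by rewrite sgcharM sgchar_flip // /congN Nh_w mulN1r mulNr.
by move/eqP; rewrite -addr_eq0 -mulr2n mulrn_eq0 /= => /eqP.
Qed.

Lemma Vgen_admissible s J (h : {ffun 'I_r -> nat}) : (s + 3 <= r)%N -> admissible s J ->
  (forall j, (h j <= p j)%N) -> (forall j : 'I_r, (0 < (j : nat))%N -> ~~ odd (h j)) ->
  [disjoint J & Jh p h] -> Vgen p s J h.
Proof.
move=> s3_le_r /andP[J_ge J_odd] h_le h_even dis.
rewrite /Vgen J_ge J_odd dis /= andbT /inL /inH -andbA; apply/and3P; split.
- exact/forallP.
- apply: leq_trans (_ : r - s <= _)%N; first lia.
  apply: leq_trans J_ge (subset_leq_card _); apply/subsetP => j jJ.
  by rewrite inE; move: (disjointFr dis jJ); rewrite inE => ->.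
- by apply/forallP => j; apply/implyP/h_even.
Qed.

Lemma sgproj_indicator_inV s J l : (s + 3 <= r)%N -> admissible s J ->
  inV p s (sgproj J (fun n => ((n == l %[mod M])%Z)%:R)).
Proof.
move=> s3_le_r J_adm; have [h [e [h_le h_even l_Nh]]] := Nh_surj l.
apply: (eq_inV (g := fun n => sgchar J e * sgsum J h n)) => [n|].
  rewrite /sgproj /sgsum mulr_sumr (reindex_inj (can_inj (signMK e))).
  apply: eq_bigr => t _; rewrite l_Nh -/(congN p h _ _).
  by rewrite congN_sgunit signMK sgcharM mulrCA mulrA.
apply: inVZ; have [dis|] := boolP [disjoint J & Jh p h].
  apply: (eq_inV (g := fun n => _ * gJ p J h n)) => [n|]; first by rewrite sgsum_gJ.
  by apply/inVZ/inV_gJ/Vgen_admissible.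
rewrite disjoint_subset => /subsetPn[k kJ].
rewrite !inE negbK => pk_hk.
by apply: (eq_inV (g := fun _ => 0)) => [n|]; [apply: sgsum_eq0 kJ pk_hk | apply: inV0].
Qed.

Lemma inV_of_sgproj s f : (s + 3 <= r)%N -> periodic f ->
  (forall J, ~~ admissible s J -> forall n, sgproj J f n = 0) -> inV p s f.
Proof.
move=> s3_le_r f_per f_adm.
apply: (eq_inV (g := fun n => (2 ^+ r)^-1 * \sum_J sgproj J f n)) => [n|].
  exact: sgproj_decomposition.
apply/inVZ/inV_sum => J; have [J_adm|/f_adm J_bad] := boolP (admissible s J); last first.
  by apply: eq_inV (inV0 s).
apply: (eq_inV (g := fun n => \sum_(l < M) f (l : nat)%:Z *
  sgproj J (fun n => ((n == (l : nat)%:Z %[mod M])%Z)%:R) n)) => [n|].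
  rewrite /sgproj; under eq_bigr => t _ do rewrite -(sum_indicator (sgunit t * n) f_per) mulr_sumr.
  rewrite exchange_big /=; apply: eq_bigr => l _; rewrite mulr_sumr.
  by apply: eq_bigr => t _; rewrite mulrCA.
by apply: inV_sum => l; apply/inVZ/sgproj_indicator_inV.
Qed.

Lemma inV_mean0 s f : (s < r)%N -> inV p s f -> \sum_(l < M) f (l : nat)%:Z = 0.
Proof.
move=> s_lt_r f_V; have f_per := inV_periodic f_V.
have : (\sum_(l < M) f (l : nat)%:Z) *+ #|{: signs}| = 0.
  rewrite -sumr_const; under eq_bigr => t _ do rewrite (reindex_sgunit t f_per).
  rewrite exchange_big big1 //= => l _.
  rewrite -[in RHS](inV_sgproj (l : nat)%:Z f_V (J := set0)).
    by apply: eq_big => // t _; rewrite sgchar0 mul1r.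
  by rewrite /admissible cards0 leqn0 subn_eq0 leqNgt s_lt_r.
by move/eqP; rewrite mulrn_eq0 card_ffun card_bool card_ord expn_eq0 /= => /eqP.
Qed.

Lemma inV_odd s f n : inV p s f -> f (- n) = (-1) ^+ (r - s) * f n.
Proof.
move=> f_V; have f_per := inV_periodic f_V.
rewrite (f_per _ (sgunit signN1 * n)); last first.
  by rewrite -modzMml (sgunit_const true) modzMml mulN1r.
rewrite !(sgproj_decomposition _ f_per) mulrCA; congr (_ * _).
rewrite mulr_sumr; apply: eq_bigr => J _.
rewrite sgproj_sgunit // sgcharN1.
have [/andP[_ /eqP J_odd]|J_bad] := boolP (admissible s J).
  by rewrite -[(-1) ^+ #|J|]signr_odd J_odd signr_odd.
by rewrite (inV_sgproj _ f_V J_bad) !mulr0.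
Qed.

Lemma zeta_neq0 : zeta p != 0.
Proof.
apply/eqP => z0; have := rootCK Pp_gt0 (-1 : algC).
by rewrite -/(zeta p) z0 expr0n gtn_eqF ?Pp_gt0 // => /eqP; rewrite eq_sym oppr_eq0 oner_eq0.
Qed.

Lemma zeta_mod a b : (a = b %[mod M])%Z -> zeta p ^ a = zeta p ^ b.
Proof.
have zetaM : zeta p ^+ M = 1 by rewrite mulnC exprM rootCK ?Pp_gt0 // sqrrN expr1n.
move=> /eqz_modP /dvdzP[k ab]; rewrite -(subrK b a) ab expfzDr ?zeta_neq0 //.
by rewrite (mulrC k) -exprz_exp -exprnP zetaM exp1rz mul1r.
Qed.

Lemma dft_periodic f : periodic (dft p f).
Proof.
move=> a b ab; rewrite /dft; congr (_ * _); apply: eq_bigr => l _; congr (_ * _).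
by apply/zeta_mod/eqz_modN/eqz_modMl.
Qed.

Lemma dft_sgunit f s n : periodic f ->
  dft p f (sgunit s * n) = dft p (fun m => f (sgunit s * m)) n.
Proof.
move=> f_per; rewrite /dft; congr (_ * _).
rewrite (reindex_sgunit s (F := fun m => zeta p ^ (- (m * (sgunit s * n))) * f m)).
  apply: eq_bigr => l _; congr (_ * _); apply/zeta_mod/eqz_modN.
  by rewrite mulrACA -mulrA sgunitK.
by move=> a b ab; rewrite (f_per _ _ ab); congr (_ * _); apply/zeta_mod/eqz_modN/eqz_modM.
Qed.

Lemma sgproj_dft J f n : periodic f -> sgproj J (dft p f) n = dft p (sgproj J f) n.
Proof.
move=> f_per; rewrite /sgproj; under eq_bigr => s _ do rewrite dft_sgunit //.
rewrite /dft; under eq_bigr => s _ do rewrite mulrCA.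
rewrite -mulr_sumr; congr (_ * _).
under eq_bigr => s _ do rewrite mulr_sumr.
rewrite exchange_big /=; apply: eq_bigr => l _.
by rewrite mulr_sumr; apply: eq_bigr => s _; rewrite mulrCA.
Qed.

Lemma inV_dft s f : (s + 3 <= r)%N -> inV p s f -> inV p s (dft p f).
Proof.
move=> s3_le_r f_V; have f_per := inV_periodic f_V.
apply: inV_of_sgproj (dft_periodic f) _ => // J J_bad n.
rewrite sgproj_dft // /dft big1 ?mulr0 // => l _.
by rewrite (inV_sgproj _ f_V J_bad) mulr0.
Qed.

Definition congN_set (h : 'I_r -> nat) m := [set e | congN p h m e].

Lemma congN_set_sgunit (h : 'I_r -> nat) s m :
  congN_set h (sgunit s * m) = signM s @: congN_set h m.
Proof.
apply/setP => e; rewrite -[e in RHS](signKM s e) (mem_imset _ _ (signM_inj s)).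
by rewrite !inE congN_sgunit.
Qed.

Lemma msf_mod s a b : (a = b %[mod M])%Z -> msf p s a = msf p s b.
Proof.
move=> ab; have eqN := congN_mod (@one_vec r) ab.
by rewrite /msf (eq_pick eqN) (eq_finset _ eqN).
Qed.

Lemma msf_uniq s m e : congN_set (@one_vec r) m = [set e] ->
  msf p s m = - sgchar setT e * sglin (fun j => (phat p j)%:R) e ^+ s.
Proof.
move=> m_e; rewrite /msf -/(congN_set _ m) m_e cards1 eqxx.
have congN_e e' : congN p (@one_vec r) m e' = (e' == e) by rewrite -in_set1 -m_e inE.
case: pickP => [e' /[!congN_e] /eqP -> | /(_ e)]; last by rewrite congN_e eqxx.
by rewrite /sgchar (eq_bigl predT) // => j; rewrite inE.
Qed.

Lemma Tr_sgunit s n : (Tr p (sgunit s * n) = sgunit s * Tr p n %[mod M])%Z.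
Proof.
rewrite /Tr; case: ifP => // _; rewrite mulrBr; apply: eqz_modD => //.
by apply/eqz_modN; rewrite sgunit_Pp.
Qed.

Lemma sgproj_msf s J n : (s <= r)%N -> ~~ admissible s J ->
  sgproj J (fun m => msf p s (Tr p m)) n = 0.
Proof.
move=> s_le_r J_bad; rewrite /sgproj; set m := Tr p n.
under eq_bigr => t _ do rewrite (msf_mod s (Tr_sgunit t n)) -/m.
have [m_e|m_not1] := boolP (#|congN_set (@one_vec r) m| == 1%N); last first.
  rewrite big1 // => t _; rewrite /msf -/(congN_set _ _) congN_set_sgunit.
  by rewrite card_imset ?(negbTE m_not1) ?mulr0 //; apply: signM_inj.
have [e me] := cards1P m_e.
under eq_bigr => t _ do rewrite (msf_uniq s (e := signM t e)) ?congN_set_sgunit ?me ?imset_set1 //.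
rewrite (reindex_inj (can_inj (signMK e))) /=.
under eq_bigr => t _ do rewrite signMK sgcharM mulNr mulrN mulrACA mulrCA sgchar_setC.
rewrite sumrN -mulr_sumr sgchar_sglin_expr_orthogonal ?mulr0 ?oppr0 //.
by rewrite -admissible_setC.
Qed.

Lemma inV_msf s : (s + 3 <= r)%N -> inV p s (fun n => msf p s (Tr p n)).
Proof.
move=> s3_le_r; apply: inV_of_sgproj => // [a b ab|J J_bad n].
  by apply: msf_mod; rewrite /Tr; case: ifP => // _; apply: eqz_modD.
by apply: sgproj_msf => //; lia.
Qed.

End SignAction.

Theorem corollaryB12 (r : nat) (p : 'I_r -> nat) (s : nat) :
  (3 <= r)%N ->
  (forall j, (0 < p j)%N) ->
  (forall i j : 'I_r, i != j -> coprime (p i) (p j)) ->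
  (forall j : 'I_r, (0 < (j : nat))%N -> odd (p j)) ->
  (s <= r - 3)%N ->
  [/\ inV p s (fun n => msf p s (Tr p n)),
      inV p s (dft p (fun n => msf p s (Tr p n))),
      (forall f : int -> algC, inV p s f ->
         [/\ forall n, f (n + (2 * Pp p)%N%:Z) = f n,
             \sum_(l < (2 * Pp p)%N) f (l : nat)%:Z = 0
           & forall n, f (- n) = (-1) ^+ (r - s) * f n])
    & forall f : int -> algC, inV p s f -> inV p s (dft p f)].
Proof.
move=> r3 p_gt0 p_coprime p_odd s_le.
have r_gt0 : (0 < r)%N by apply: leq_trans r3.
have s3_le_r : (s + 3 <= r)%N by lia.
have msf_V : inV p s (fun n => msf p s (Tr p n)) by apply: inV_msf.
split=> // [|f f_V|f f_V]; [exact: inV_dft | split=> [n||n] | exact: inV_dft].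
- by apply: (inV_periodic f_V); rewrite modzDr.
- by apply: inV_mean0 f_V => //; lia.
- exact: inV_odd f_V.
Qed.
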